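(* Let $\beta \in \mathcal{P}$ and $\alpha \in E$ satisfy $\alpha^{q+1} = \beta^q + \beta^{q^2+q+1}$. If $\alpha \neq 0$, then $\alpha^{q^2-1}\beta^{q+1} = 1$.
   Context: Let $q = 2^m$ with $m \ge 1$, and let $E = \mathbb{F}_{q^4}$. Define $\mathcal{P} = \{x \in E \mid x^{q^3+q^2+q+1} = 1\}$. *)

From HB Require Import structures.
From mathcomp Require Import all_boot all_order all_algebra all_field.
Set Implicit Arguments. Unset Strict Implicit. Unset Printing Implicit Defensive.
Import GRing.Theory.
Local Open Scope ring_scope.

Definition Pset (E : finFieldType) (q : nat) : {set E} :=
  [set x : E | x ^+ (q ^ 3 + q ^ 2 + q + 1)%N == 1].

From HB Require Import structures.
From mathcomp Require Import all_boot all_order all_algebra all_field.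
From mathcomp Require Import zify.
Import GRing.Theory.
Local Open Scope ring_scope.

(* Put A := alpha^(q+1) = beta^q + beta^(q^2+q+1).  Since x |-> x^q is additive
   in characteristic 2, A^q = beta^(q^2) + beta^(q^3+q^2+q), and multiplying by
   beta^(q+1) permutes the two terms of A modulo beta^(q^3+q^2+q+1) = 1.  Hence
   A^q beta^(q+1) = A, i.e. A^(q-1) beta^(q+1) = 1, and A^(q-1) = alpha^(q^2-1). *)

Lemma frobenius_twisted_sum_fixed (R : comNzSemiRingType) (q : nat) (beta : R) :
  [pchar R].-nat q -> beta ^+ (q ^ 3 + q ^ 2 + q + 1) = 1 ->
  let A := beta ^+ q + beta ^+ (q ^ 2 + q + 1) in A ^+ q * beta ^+ (q + 1) = A.
Proof.
move=> q_pchar beta_norm1 A.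
rewrite exprDn_pchar // -!exprM mulrDl -!exprD.
have -> : (q * q + (q + 1) = q ^ 2 + q + 1)%N by lia.
have -> : ((q ^ 2 + q + 1) * q + (q + 1) = (q ^ 3 + q ^ 2 + q + 1) + q)%N by nia.
by rewrite [beta ^+ (_ + q)]exprD beta_norm1 mul1r addrC.
Qed.

Lemma expr_sqr_subn1 (R : pzSemiRingType) (x : R) (q : nat) :
  x ^+ (q ^ 2 - 1) = (x ^+ (q + 1)) ^+ (q - 1).
Proof. by rewrite -exprM mulnC -{2}(exp1n 2) subn_sqr. Qed.

Lemma expr_pred_mul_eq1 (R : idomainType) (a b : R) (q : nat) :
  a != 0 -> (0 < q)%N -> a ^+ q * b = a -> a ^+ (q - 1) * b = 1.
Proof.
move=> a_neq0 q_gt0 aqb; apply: (mulIf a_neq0).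
by rewrite mul1r mulrAC -exprSr subn1 prednK.
Qed.

Theorem lemma2p2 (m : nat) (E : finFieldType) :
  (1 <= m)%N ->
  #|E| = ((2 ^ m) ^ 4)%N ->
  forall alpha beta : E,
    beta \in Pset E (2 ^ m) ->
    alpha ^+ (2 ^ m + 1) = beta ^+ (2 ^ m) + beta ^+ ((2 ^ m) ^ 2 + 2 ^ m + 1) ->
    alpha != 0 ->
    alpha ^+ ((2 ^ m) ^ 2 - 1) * beta ^+ (2 ^ m + 1) = 1.
Proof.
move=> _ cardE alpha beta; rewrite inE => /eqP beta_norm1 hA alpha_neq0.
have pchar2 : (2 \in [pchar E])%N.
  by apply: (card_finPcharP (n := (m * 4)%N)) => //; rewrite expnM.
have q_pchar : [pchar E].-nat (2 ^ m)%N by rewrite pnatX pnatE ?pchar2.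
rewrite expr_sqr_subn1; apply: expr_pred_mul_eq1.
- by rewrite expf_neq0.
- by rewrite expn_gt0.
- by rewrite hA; exact: frobenius_twisted_sum_fixed.
Qed.
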